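(* Let $X$ be a finitely presented group. Then the deficiency of the one-object groupoid $\Sigma(X)$, taken with respect to presentations by groupoidal computads, equals the classical deficiency of $X$.
   Context: Classical deficiency of a group. For a finite group presentation $\langle S\mid R\rangle$ (finite generating set $S$, finite set $R$ of relations), its deficiency is $|S|-|R|$. The deficiency of a finitely presented group $X$ is the maximum of $|S|-|R|$ over all finite presentations of $X$. Suspension. $\Sigma(X)$ is the groupoid with one object whose endomorphism group is $X$. Groupoidal computads. - A small graph $G$ consists of a set of objects, a set of arrows, and domain and codomain maps. $\mathcal{L}_1\mathcal{F}_1(G)$ is the free groupoid on $G$. - A small groupoidal computad $(G,\mathfrak{g}_2,s,t)$ is a set $\mathfrak{g}_2$ together with, for each $\alpha\in\mathfrak{g}_2$, parallel morphisms $s(\alpha),t(\alpha)$ of $\mathcal{L}_1\mathcal{F}_1(G)$. - It presents a groupoid $Y$ if $Y$ is isomorphic to the quotient of $\mathcal{L}_1\mathcal{F}_1(G)$ by the relations $s(\alpha)=t(\alpha)$. - It is connected if $G$ is connected. Deficiency with respect to groupoidal computads. Let $\chi$ denote the real Euler characteristic, and let $\mathcal{F}_{\mathrm{Top}_1}(G)$ be the topological realization of $G$. - A presentation with $\chi(\mathcal{F}_{\mathrm{Top}_1}(G))\in\mathbb{Z}$ and $\mathfrak{g}_2$ finite has deficiency $1-|\mathfrak{g}_2|-\chi(\mathcal{F}_{\mathrm{Top}_1}(G))$. - The deficiency of a groupoid $Y$ is the maximum of these numbers over all small connected groupoidal computads presenting $Y$. *)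

From Stdlib Require Import Reals ZArith List ClassicalEpsilon.
From Stdlib Require Fin.
Import ListNotations.
Set Implicit Arguments.
Unset Strict Implicit.

Record group := Group {
  gcar :> Type;
  gmul : gcar -> gcar -> gcar;
  gone : gcar;
  ginv : gcar -> gcar;
  gmulA : forall x y z, gmul x (gmul y z) = gmul (gmul x y) z;
  gmul1l : forall x, gmul gone x = x;
  gmul1r : forall x, gmul x gone = x;
  gmulVl : forall x, gmul (ginv x) x = gone;
  gmulVr : forall x, gmul x (ginv x) = gone }.

(* Classical finite presentations <S | R> with S = Fin.t n and R a     *)
(* finite set (duplicate-free list) of relators, i.e. words in S^{+-1} *)
Definition word (n : nat) := list (Fin.t n * bool).

Inductive gcong (n : nat) (R : list (word n)) : word n -> word n -> Prop :=
| gc_refl u : gcong R u u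
| gc_sym u v : gcong R u v -> gcong R v u
| gc_trans u v w : gcong R u v -> gcong R v w -> gcong R u w
| gc_cancel u x b v : gcong R (u ++ (x, b) :: (x, negb b) :: v) (u ++ v)
| gc_rel u r v : In r R -> gcong R (u ++ r ++ v) (u ++ v).

(* X is isomorphic to F(S)/<<R>>: there is a homomorphism from words   *)
(* onto X whose kernel congruence is exactly gcong R.                 *)
Definition is_presentation (X : group) (n : nat) (R : list (word n)) : Prop :=
  NoDup R /\
  exists F : word n -> X,
    F [] = gone X /\
    (forall u v, F (u ++ v) = gmul (F u) (F v)) /\
    (forall x : X, exists u, F u = x) /\
    (forall u v, F u = F v <-> gcong R u v).

Definition finitely_presented (X : group) : Prop :=
  exists n (R : list (word n)), is_presentation X R.

Definition classical_deficiencies (X : group) (d : Z) : Prop :=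
  exists n (R : list (word n)),
    is_presentation X R /\ d = (Z.of_nat n - Z.of_nat (length R))%Z.

Definition IsGreatest (P : Z -> Prop) (d : Z) : Prop :=
  P d /\ forall d', P d' -> (d' <= d)%Z.

(* Groupoids and the suspension Sigma(X).  Composition is diagrammatic *)
Record groupoid := Groupoid {
  gobj : Type;
  ghom : gobj -> gobj -> Type;
  gcomp : forall a b c, ghom a b -> ghom b c -> ghom a c;
  gid : forall a, ghom a a;
  gginv : forall a b, ghom a b -> ghom b a;
  gcompA : forall a b c d (f : ghom a b) (g : ghom b c) (h : ghom c d),
      gcomp f (gcomp g h) = gcomp (gcomp f g) h;
  gcomp1l : forall a b (f : ghom a b), gcomp (gid a) f = f;
  gcomp1r : forall a b (f : ghom a b), gcomp f (gid b) = f;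
  gcompVl : forall a b (f : ghom a b), gcomp (gginv f) f = gid b;
  gcompVr : forall a b (f : ghom a b), gcomp f (gginv f) = gid a }.

Definition Sigma (X : group) : groupoid :=
  @Groupoid unit (fun _ _ => gcar X)
    (fun _ _ _ f g => gmul f g) (fun _ => gone X) (fun _ _ f => ginv f)
    (fun _ _ _ _ f g h => gmulA f g h)
    (fun _ _ f => gmul1l f) (fun _ _ f => gmul1r f)
    (fun _ _ f => gmulVl f) (fun _ _ f => gmulVr f).

Record graph := Graph {
  gv : Type;
  ge : Type;
  src : ge -> gv;
  tgt : ge -> gv }.

(* Zig-zag paths = words representing morphisms of the free groupoid   *)
(* L1F1(G); pfwd traverses an arrow forwards, pbwd backwards.          *)
Inductive path (G : graph) : gv G -> gv G -> Type :=
| pnil a : path a a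
| pfwd (e : ge G) b : path (tgt e) b -> path (src e) b
| pbwd (e : ge G) b : path (src e) b -> path (tgt e) b.

Arguments pnil {G} a.
Arguments pfwd {G} e {b} _.
Arguments pbwd {G} e {b} _.

Fixpoint pcat (G : graph) (a b c : gv G) (p : path a b) : path b c -> path a c :=
  match p in path a b return path b c -> path a c with
  | pnil _ => fun q => q
  | pfwd e p' => fun q => pfwd e (pcat p' q)
  | pbwd e p' => fun q => pbwd e (pcat p' q)
  end.

(* A small groupoidal computad (G, g2, s, t): each 2-cell alpha has     *)
(* parallel morphisms s(alpha), t(alpha) of L1F1(G) (given by paths).  *)
Record computad := Computad {
  cgraph :> graph;
  cells : Type;
  cdom : cells -> gv cgraph;
  ccod : cells -> gv cgraph;
  csrc : forall al, path (cdom al) (ccod al);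
  ctgt : forall al, path (cdom al) (ccod al) }.

Inductive pcong (C : computad) : forall a b : gv C, path a b -> path a b -> Prop :=
| pc_refl a b (p : path a b) : pcong p p
| pc_sym a b (p q : path a b) : pcong p q -> pcong q p
| pc_trans a b (p q r : path a b) : pcong p q -> pcong q r -> pcong p r
| pc_whisk a b c d (p : path a b) (q q' : path b c) (r : path c d) :
    pcong q q' -> pcong (pcat p (pcat q r)) (pcat p (pcat q' r))
| pc_fb (e : ge C) b (p : path (src e) b) : pcong (pfwd e (pbwd e p)) p
| pc_bf (e : ge C) b (p : path (tgt e) b) : pcong (pbwd e (pfwd e p)) p
| pc_rel (al : cells C) : pcong (csrc al) (ctgt al).

(* C presents Y: Y is isomorphic to the quotient groupoid, i.e. there is *)
(* a bijection on objects and a functor from paths to Y, surjective on  *)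
(* each hom-set, whose kernel congruence is exactly pcong.              *)
Definition presents (C : computad) (Y : groupoid) : Prop :=
  exists (fo : gv C -> gobj Y)
         (F : forall a b : gv C, path a b -> @ghom Y (fo a) (fo b)),
    (forall y, exists x, fo x = y) /\
    (forall x x', fo x = fo x' -> x = x') /\
    (forall a, F a a (pnil a) = @gid Y (fo a)) /\
    (forall a b c (p : path a b) (q : path b c),
        F a c (pcat p q) = gcomp (F a b p) (F b c q)) /\
    (forall a b (h : @ghom Y (fo a) (fo b)), exists p, F a b p = h) /\
    (forall a b (p q : path a b), F a b p = F a b q <-> pcong p q).

Definition connected (G : graph) : Prop :=
  inhabited (gv G) /\ forall a b : gv G, inhabited (path a b).

(* Real Euler characteristic of the topological realization of G,      *)
(* computed by real cellular homology of the 1-dimensional CW complex:  *)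
(* C_1 = finitely supported R-valued functions on arrows, C_0 = on      *)
(* objects, boundary(e) = tgt e - src e.  chi is defined (and then an   *)
(* integer) iff H_0 and H_1 are finite dimensional.                     *)
Open Scope R_scope.

Definition ind (P : Prop) : R :=
  if excluded_middle_informative P then 1 else 0.

Definition fsupp (T : Type) (f : T -> R) : Prop :=
  exists l : list T, forall x, f x <> 0 -> In x l.

Definition lsum (T : Type) (l : list T) (f : T -> R) : R :=
  fold_right (fun x acc => f x + acc) 0 l.

Definition is_fsum (T : Type) (f : T -> R) (s : R) : Prop :=
  exists l : list T, NoDup l /\ (forall x, f x <> 0 -> In x l) /\ s = lsum l f.

Definition is_boundary (G : graph) (c : ge G -> R) (d : gv G -> R) : Prop :=
  fsupp c /\
  forall v, is_fsum (fun e => c e * (ind (tgt e = v) - ind (src e = v))) (d v).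

Definition lincomb (T : Type) (z : list (T -> R)) (lam : nat -> R) : T -> R :=
  fun x => lsum (seq 0 (length z)) (fun i => lam i * nth i z (fun _ => 0) x).

Definition is_cycle (G : graph) (c : ge G -> R) : Prop :=
  is_boundary c (fun _ => 0).

Definition is_bdry (G : graph) (d : gv G -> R) : Prop :=
  exists c, is_boundary c d.

Definition dimH1 (G : graph) (k : nat) : Prop :=
  exists z : list (ge G -> R),
    length z = k /\ (forall c, In c z -> is_cycle c) /\
    (forall lam, (forall x, lincomb z lam x = 0) -> forall i, (i < k)%nat -> lam i = 0) /\
    (forall c, is_cycle c -> exists lam, forall x, c x = lincomb z lam x).

(* dim H_0(G; R) = k : C_0 / B_0 has a basis of k elements *)
Definition dimH0 (G : graph) (k : nat) : Prop :=
  exists w : list (gv G -> R),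
    length w = k /\ (forall d, In d w -> fsupp d) /\
    (forall lam, is_bdry (lincomb w lam) -> forall i, (i < k)%nat -> lam i = 0) /\
    (forall d, fsupp d -> exists lam, is_bdry (fun v => d v - lincomb w lam v)).

Definition euler_char (G : graph) (chi : Z) : Prop :=
  exists k0 k1, dimH0 G k0 /\ dimH1 G k1 /\ chi = (Z.of_nat k0 - Z.of_nat k1)%Z.

Close Scope R_scope.

Definition groupoid_deficiencies (Y : groupoid) (d : Z) : Prop :=
  exists C : computad,
    connected C /\ presents C Y /\
    exists (chi : Z) (l : list (cells C)),
      euler_char C chi /\ NoDup l /\ (forall al, In al l) /\
      d = (1 - Z.of_nat (length l) - chi)%Z.

(* A one-object computad is a classical presentation in disguise: its arrows are
   the generators, its 2-cells [s => t] the relators [s t^-1], and its realization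
   is a bouquet of circles with chi = 1 - #arrows, so the two deficiencies agree on
   such computads.  A computad presenting Sigma(X) has a single object, because the
   object map is a bijection onto a point; so all its arrows are loops, hence
   1-cycles, and finite-dimensionality of H_1 leaves only finitely many arrows.
   As dim H_0 >= 1 and dim H_1 <= #arrows, the induced classical presentation has
   deficiency at least 1 - |g2| - chi.  Finally the maximum exists because
   classical deficiencies are bounded: the real characters of X vanish on the r
   relators of a presentation on n generators, so they form a space of dimension
   at least n - r, and they are determined by their values on the n0 generators of
   any other presentation. *)

From Pilot Require Import Defs.
From Stdlib Require Import ZArith Reals List Lia Lra ClassicalEpsilon Classical.
From Stdlib Require Fin FinFun.
From mathcomp Require ssreflect ssrbool ssrfun eqtype ssrnat seq fintype bigop.
From mathcomp Require ssralg zmodp matrix mxalgebra Rstruct.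
Import ListNotations.

Section RealLinearAlgebra.
Import ssreflect ssrbool ssrfun eqtype ssrnat seq fintype bigop.
Import ssralg zmodp matrix mxalgebra Rstruct.
Import GRing.Theory.
Local Open Scope ring_scope.

Lemma lsum_bigop k (f : nat -> R) : lsum (List.seq 0 k) f = \sum_(i < k) f i.
Proof.
rewrite -(big_mkord xpredT) /index_iota subn0.
elim: k 0%N => [|k IH] s; first by rewrite big_nil.
by rewrite /= big_cons IH.
Qed.

(* By rank-nullity, a real [a x b] matrix with [b < a] has a nonzero left kernel. *)
Lemma free_rows_le_cols (a b : nat) (M : nat -> nat -> R) :
  (forall lam : nat -> R,
     (forall j, (j < b)%coq_nat -> lsum (List.seq 0 a) (fun i => Rmult (lam i) (M i j)) = R0) ->
     forall i, (i < a)%coq_nat -> lam i = R0) ->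
  (a <= b)%coq_nat.
Proof.
move=> free; apply/leP; rewrite leqNgt; apply/negP => ltba.
pose Mx : 'M[R]_(a, b) := \matrix_(i, j) M i j.
have /rowV0Pn [v /sub_kermxP vM vn0] : kermx Mx != 0.
  apply/negP => /eqP K0; have := mxrank_ker Mx.
  rewrite K0 mxrank0 => /esym/eqP; rewrite subn_eq0 leqNgt.
  by rewrite (leq_ltn_trans (rank_leq_col Mx) ltba).
pose lam (i : nat) : R := if (insub i : option 'I_a) is Some i' then v 0 i' else 0.
have lamE (i : 'I_a) : lam i = v 0 i by rewrite /lam valK.
apply/negP: vn0; apply/negPn/eqP/rowP => i; rewrite mxE -lamE.
apply: free (ltP (ltn_ord i)) => j /ltP ltjb.
have := congr1 (fun A : 'M[R]_(1, b) => A 0 (Ordinal ltjb)) vM; rewrite !mxE => sum0.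
by rewrite lsum_bigop -[RHS]sum0; apply: eq_bigr => k _; rewrite lamE mxE.
Qed.

End RealLinearAlgebra.

Open Scope R_scope.

Lemma lsum_ext {T} (l : list T) f g :
  (forall x, In x l -> f x = g x) -> lsum l f = lsum l g.
Proof.
  induction l as [|y l IH]; intros H; simpl; [reflexivity|].
  rewrite H, IH; [reflexivity| |left; reflexivity]. intros x Hx. apply H. right. exact Hx.
Qed.

Lemma lsum_zero {T} (l : list T) f : (forall x, In x l -> f x = 0) -> lsum l f = 0.
Proof.
  induction l as [|y l IH]; intros H; simpl; [reflexivity|].
  rewrite H, IH; [ring| |left; reflexivity]. intros x Hx. apply H. right. exact Hx.
Qed.

Lemma lsum_plus {T} (l : list T) f g : lsum l (fun x => f x + g x) = lsum l f + lsum l g.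
Proof. induction l as [|y l IH]; simpl; [ring|rewrite IH; ring]. Qed.

Lemma lsum_opp {T} (l : list T) f : lsum l (fun x => - f x) = - lsum l f.
Proof. induction l as [|y l IH]; simpl; [ring|rewrite IH; ring]. Qed.

Lemma lsum_nonzero {T} (l : list T) f : lsum l f <> 0 -> exists x, In x l /\ f x <> 0.
Proof.
  intros H. apply NNPP. intros Hnone. apply H, lsum_zero.
  intros x Hx. apply NNPP. eauto.
Qed.

Definition delta (j i : nat) : R := if Nat.eq_dec j i then 1 else 0.

Lemma lsum_delta c j s k : (s <= j < s + k)%nat ->
  lsum (seq s k) (fun i => c i * delta j i) = c j.
Proof.
  revert s. induction k as [|k IH]; intros s Hj; [lia|]. simpl. unfold delta at 1.
  destruct (Nat.eq_dec j s) as [->|Hne].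
  - rewrite lsum_zero; [ring|]. intros i Hi. apply in_seq in Hi.
    unfold delta. destruct (Nat.eq_dec s i); [lia|ring].
  - rewrite IH by lia. ring.
Qed.

Definition idx {n} (x : Fin.t n) : nat := proj1_sig (Fin.to_nat x).

Lemma idx_lt {n} (x : Fin.t n) : (idx x < n)%nat.
Proof. exact (proj2_sig (Fin.to_nat x)). Qed.

Lemma idx_of_nat {n j} (h : (j < n)%nat) : idx (Fin.of_nat_lt h) = j.
Proof. unfold idx. rewrite Fin.to_nat_of_nat. reflexivity. Qed.

Lemma of_nat_idx {n} (x : Fin.t n) (h : (idx x < n)%nat) : Fin.of_nat_lt h = x.
Proof.
  rewrite (Fin.of_nat_ext h (proj2_sig (Fin.to_nat x))). apply Fin.of_nat_to_nat_inv.
Qed.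

Fixpoint fin_enum (n : nat) : list (Fin.t n) :=
  match n with 0 => [] | S m => Fin.F1 :: map Fin.FS (fin_enum m) end.

Lemma fin_enum_In n (x : Fin.t n) : In x (fin_enum n).
Proof.
  induction n as [|n IH]; [apply (Fin.case0 _ x)|].
  apply (Fin.caseS' x); simpl; [left; reflexivity|].
  intros y. right. apply in_map, IH.
Qed.

Lemma fin_enum_length n : length (fin_enum n) = n.
Proof. induction n as [|n IH]; simpl; [|rewrite length_map, IH]; reflexivity. Qed.

Lemma fin_enum_NoDup n : NoDup (fin_enum n).
Proof.
  induction n as [|n IH]; simpl; constructor.
  - intros H. apply in_map_iff in H. destruct H as [y [H _]]. discriminate.
  - apply FinFun.Injective_map_NoDup; [|exact IH]. intros x y. apply Fin.FS_inj.
Qed.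

Fixpoint fnth {T} (L : list T) : Fin.t (length L) -> T :=
  match L return Fin.t (length L) -> T with
  | [] => fun k => Fin.case0 (fun _ => T) k
  | x :: L' => fun k => Fin.caseS' k (fun _ => T) x (fnth L')
  end.

Lemma fnth_In {T} (L : list T) k : In (fnth L k) L.
Proof.
  induction L as [|x L IH]; [apply (Fin.case0 _ k)|].
  apply (Fin.caseS' k); simpl; [left; reflexivity|]. intros k'. right. apply IH.
Qed.

Lemma fnth_surj {T} (L : list T) x : In x L -> exists k, fnth L k = x.
Proof.
  induction L as [|y L IH]; [intros []|intros [->|Hx]].
  - exists Fin.F1. reflexivity.
  - destruct (IH Hx) as [k Hk]. exists (Fin.FS k). exact Hk.
Qed.

Lemma fnth_inj {T} (L : list T) : NoDup L -> forall k k', fnth L k = fnth L k' -> k = k'.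
Proof.
  induction L as [|x L IH]; intros HL k; [inversion k|].
  destruct (proj1 (NoDup_cons_iff x L) HL) as [Hx HL'].
  intros k'. apply (Fin.caseS' k); apply (Fin.caseS' k'); simpl.
  - reflexivity.
  - intros j Hj. exfalso. apply Hx. rewrite Hj. apply fnth_In.
  - intros j Hj. exfalso. apply Hx. rewrite <- Hj. apply fnth_In.
  - intros j j' Hj. f_equal. exact (IH HL' _ _ Hj).
Qed.

Lemma listing_bijection {T} (L : list T) : NoDup L -> (forall x, In x L) ->
  exists enc : T -> Fin.t (length L),
    (forall x, fnth L (enc x) = x) /\ (forall k, enc (fnth L k) = k).
Proof.
  intros HL Hall.
  assert (Henc : forall x, {k | fnth L k = x}).
  { intros x. apply constructive_indefinite_description, fnth_surj, Hall. }
  exists (fun x => proj1_sig (Henc x)). split.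
  - intros x. apply proj2_sig.
  - intros k. apply (fnth_inj L HL), proj2_sig.
Qed.

Section GroupFacts.
Variable X : group.

Lemma ginv_unique (a b : X) : gmul a b = gone X -> a = ginv b.
Proof. intros H. rewrite <- (gmul1r a), <- (gmulVr b), gmulA, H, gmul1l. reflexivity. Qed.

Lemma ginv_inv (a : X) : ginv (ginv a) = a.
Proof. symmetry. apply ginv_unique, gmulVr. Qed.

Lemma ginv_mul (a b : X) : ginv (gmul a b) = gmul (ginv b) (ginv a).
Proof.
  symmetry. apply ginv_unique.
  rewrite <- gmulA, (gmulA (ginv a)), gmulVl, gmul1l, gmulVl. reflexivity.
Qed.

End GroupFacts.

Definition flip {A} (p : A * bool) : A * bool := (fst p, negb (snd p)).
Definition winv {A} (w : list (A * bool)) : list (A * bool) := rev (map flip w).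
Definition wmap {A B} (f : A -> B) (w : list (A * bool)) : list (B * bool) :=
  map (fun p => (f (fst p), snd p)) w.

Lemma wmap_app {A B} (f : A -> B) u v : wmap f (u ++ v) = wmap f u ++ wmap f v.
Proof. apply map_app. Qed.

Lemma wmap_winv {A B} (f : A -> B) w : wmap f (winv w) = winv (wmap f w).
Proof. unfold wmap, winv. rewrite map_rev, !map_map. reflexivity. Qed.

Lemma wmap_cancel {A B} (f : A -> B) (g : B -> A) w :
  (forall x, g (f x) = x) -> wmap g (wmap f w) = w.
Proof.
  intros fK. unfold wmap. rewrite map_map. rewrite <- (map_id w) at 2.
  apply map_ext. intros [x b]. simpl. rewrite fK. reflexivity.
Qed.

Section Congruence.
Variables (n : nat) (R : list (word n)).

Lemma gcong_whisker u v w w' : gcong R u v -> gcong R (w ++ u ++ w') (w ++ v ++ w').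
Proof.
  induction 1 as [| | |u x b v|u r v Hr].
  - apply gc_refl.
  - apply gc_sym; assumption.
  - eapply gc_trans; eassumption.
  - replace (w ++ (u ++ (x, b) :: (x, negb b) :: v) ++ w')
      with ((w ++ u) ++ (x, b) :: (x, negb b) :: v ++ w') by (rewrite <- !app_assoc; reflexivity).
    replace (w ++ (u ++ v) ++ w') with ((w ++ u) ++ v ++ w')
      by (rewrite <- !app_assoc; reflexivity).
    apply gc_cancel.
  - replace (w ++ (u ++ r ++ v) ++ w') with ((w ++ u) ++ r ++ v ++ w')
      by (rewrite <- !app_assoc; reflexivity).
    replace (w ++ (u ++ v) ++ w') with ((w ++ u) ++ v ++ w')
      by (rewrite <- !app_assoc; reflexivity).
    apply gc_rel, Hr.
Qed.

Lemma gcong_app u u' v v' : gcong R u u' -> gcong R v v' -> gcong R (u ++ v) (u' ++ v').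
Proof.
  intros Hu Hv. eapply gc_trans.
  - pose proof (gcong_whisker u u' [] v Hu) as H. rewrite !app_nil_l in H. exact H.
  - pose proof (gcong_whisker v v' u' [] Hv) as H. rewrite !app_nil_r in H. exact H.
Qed.

Lemma gcong_winv_l w : gcong R (winv w ++ w) [].
Proof.
  induction w as [|[x b] w IH]; [apply gc_refl|].
  change (winv ((x, b) :: w)) with (winv w ++ [(x, negb b)]).
  eapply gc_trans; [|exact IH]. rewrite <- app_assoc. simpl.
  pose proof (gc_cancel R (winv w) x (negb b) w) as H. rewrite Bool.negb_involutive in H.
  exact H.
Qed.

End Congruence.

Arguments gcong_whisker {n R u v} w w' _.
Arguments gcong_app {n R u u' v v'} _ _.
Arguments gcong_winv_l {n} R w.

Section Evaluation.
Variables (X : group) (A : Type) (g : A -> X).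

Definition lval (p : A * bool) : X := if snd p then g (fst p) else ginv (g (fst p)).
Definition weval (w : list (A * bool)) : X :=
  fold_right (fun p acc => gmul (lval p) acc) (gone X) w.

Lemma weval_app u v : weval (u ++ v) = gmul (weval u) (weval v).
Proof.
  induction u as [|p u IH]; simpl; [rewrite gmul1l|rewrite IH, gmulA]; reflexivity.
Qed.

Lemma weval_winv w : weval (winv w) = ginv (weval w).
Proof.
  induction w as [|[x b] w IH]; simpl.
  - apply ginv_unique, gmul1l.
  - unfold winv in *. simpl. rewrite weval_app, IH, ginv_mul. simpl. rewrite gmul1r.
    unfold lval. destruct b; simpl; [|rewrite ginv_inv]; reflexivity.
Qed.

Lemma weval_cancel u x b v : weval (u ++ (x, b) :: (x, negb b) :: v) = weval (u ++ v).
Proof.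
  rewrite !weval_app. simpl. f_equal. rewrite gmulA. unfold lval. destruct b; simpl.
  - rewrite gmulVr, gmul1l. reflexivity.
  - rewrite gmulVl, gmul1l. reflexivity.
Qed.

End Evaluation.

Arguments weval {X A} g w.

Lemma presentation_winv (X : group) {n} (R : list (word n)) (F : word n -> X) :
  F [] = gone X -> (forall u v, F (u ++ v) = gmul (F u) (F v)) ->
  (forall u v, gcong R u v -> F u = F v) -> forall w, F (winv w) = ginv (F w).
Proof.
  intros Fnil Fapp Fcong w. apply ginv_unique. rewrite <- Fapp, <- Fnil.
  apply Fcong, gcong_winv_l.
Qed.

Definition lweight {A} (f : A -> R) (p : A * bool) : R :=
  if snd p then f (fst p) else - f (fst p).
Definition wsum {A} (f : A -> R) (w : list (A * bool)) : R :=
  fold_right (fun p acc => lweight f p + acc) 0 w.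

Lemma wsum_app {A} (f : A -> R) u v : wsum f (u ++ v) = wsum f u + wsum f v.
Proof. induction u as [|p u IH]; simpl; [ring|rewrite IH; ring]. Qed.

Lemma wsum_winv {A} (f : A -> R) w : wsum f (winv w) = - wsum f w.
Proof.
  induction w as [|[x b] w IH]; simpl; [ring|].
  unfold winv in *. simpl. rewrite wsum_app, IH. simpl. unfold lweight. destruct b; simpl; ring.
Qed.

Lemma wsum_gcong {n} (R0 : list (word n)) f :
  (forall r, In r R0 -> wsum f r = 0) -> forall u v, gcong R0 u v -> wsum f u = wsum f v.
Proof.
  intros Hr u v H. induction H as [| | |u x b v|u r v Hin]; try congruence.
  - rewrite !wsum_app. simpl. unfold lweight. destruct b; simpl; ring.
  - rewrite !wsum_app, (Hr r Hin). ring.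
Qed.

Lemma wsum_unit_weights n (lam : nat -> R) (w : word n) :
  lsum (seq 0 n) (fun i => lam i * wsum (fun x => delta (idx x) i) w)
  = wsum (fun x => lam (idx x)) w.
Proof.
  induction w as [|[x b] w IH]; simpl.
  - apply lsum_zero. intros i _. ring.
  - assert (Hx : (0 <= idx x < 0 + n)%nat) by (pose proof (idx_lt x); lia).
    assert (Hletter : lsum (seq 0 n) (fun i => lam i * lweight (fun y => delta (idx y) i) (x, b))
                      = lweight (fun y => lam (idx y)) (x, b)).
    { unfold lweight; simpl. rewrite <- (lsum_delta lam (idx x) 0 n Hx). destruct b.
      - reflexivity.
      - rewrite <- lsum_opp. apply lsum_ext. intros i _. ring. }
    rewrite <- Hletter, <- IH, <- lsum_plus. apply lsum_ext. intros i _. ring.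
Qed.

Definition wsubst {A B} (u : A -> list (B * bool)) (w : list (A * bool)) : list (B * bool) :=
  flat_map (fun p : A * bool => if snd p then u (fst p) else winv (u (fst p))) w.

Lemma wsum_wsubst {A B} (u : A -> list (B * bool)) f w :
  (forall x, wsum f (u x) = 0) -> wsum f (wsubst u w) = 0.
Proof.
  intros Hu. induction w as [|[x b] w IH]; simpl; [reflexivity|].
  rewrite wsum_app, IH. destruct b; [|rewrite wsum_winv]; rewrite Hu; ring.
Qed.

Lemma presentation_generators_expressible
  {X : group} {n0} {R0 : list (word n0)} {n} {R : list (word n)} :
  is_presentation X R0 -> is_presentation X R ->
  exists u : Fin.t n0 -> word n, forall w, exists w0, gcong R w (wsubst u w0).
Proof.
  intros [_ [F0 [F0nil [F0app [F0surj F0ker]]]]] [_ [F [Fnil [Fapp [Fsurj Fker]]]]].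
  assert (Hu : forall j : Fin.t n0, {u | F u = F0 [(j, true)]}).
  { intros j. apply constructive_indefinite_description, Fsurj. }
  exists (fun j => proj1_sig (Hu j)).
  assert (Hsubst : forall w0, F (wsubst (fun j => proj1_sig (Hu j)) w0) = F0 w0).
  { induction w0 as [|[j b] w0 IH]; simpl; [rewrite Fnil, F0nil; reflexivity|].
    rewrite Fapp, IH. change ((j, b) :: w0) with ([(j, b)] ++ w0). rewrite F0app. f_equal.
    destruct b; simpl; [apply proj2_sig|].
    rewrite (presentation_winv X R F Fnil Fapp (fun u v => proj2 (Fker u v))), (proj2_sig (Hu j)).
    symmetry. apply ginv_unique. rewrite <- F0app, <- F0nil. apply F0ker.
    exact (gc_cancel R0 [] j false []). }
  intros w. destruct (F0surj (F w)) as [w0 Hw0]. exists w0.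
  apply Fker. rewrite Hsubst. symmetry. exact Hw0.
Qed.

Lemma deficiency_bound {X : group} {n0} {R0 : list (word n0)} {n} {R : list (word n)} :
  is_presentation X R0 -> is_presentation X R -> (n <= length R + n0)%nat.
Proof.
  intros HP0 HP. destruct (presentation_generators_expressible HP0 HP) as [u Hu].
  set (cols := R ++ map u (fin_enum n0)).
  replace (length R + n0)%nat with (length cols)
    by (unfold cols; rewrite length_app, length_map, fin_enum_length; reflexivity).
  apply (free_rows_le_cols n (length cols)
           (fun i j => wsum (fun x => delta (idx x) i) (nth j cols []))).
  intros lam Hlam i Hi.
  set (f := fun x : Fin.t n => lam (idx x)).
  assert (Hcols : forall c, In c cols -> wsum f c = 0).
  { intros c Hc. destruct (In_nth _ _ [] Hc) as [j [Hj <-]].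
    unfold f. rewrite <- wsum_unit_weights. exact (Hlam j Hj). }
  assert (Hall : forall w, wsum f w = 0).
  { intros w. destruct (Hu w) as [w0 Hw0].
    rewrite (wsum_gcong R f (fun r Hr => Hcols r (in_or_app _ _ _ (or_introl Hr))) _ _ Hw0).
    apply wsum_wsubst. intros j. apply Hcols, in_or_app. right. apply in_map, fin_enum_In. }
  specialize (Hall [(Fin.of_nat_lt Hi, true)]).
  unfold wsum, lweight, f in Hall. simpl in Hall. rewrite idx_of_nat in Hall. lra.
Qed.

Lemma Z_bounded_has_greatest (P : Z -> Prop) (B d0 : Z) :
  P d0 -> (forall d, P d -> (d <= B)%Z) -> exists m, IsGreatest P m.
Proof.
  intros Hd0 HB.
  enough (H : forall k : nat, forall d, P d -> (B - d <= Z.of_nat k)%Z -> exists m, IsGreatest P m)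
    by (apply (H (Z.to_nat (B - d0)) d0 Hd0); lia).
  induction k as [|k IH]; intros d Pd Hk.
  - exists d. split; [exact Pd|]. intros d' Pd'. specialize (HB d' Pd'). lia.
  - destruct (classic (exists d', P d' /\ (d < d')%Z)) as [[d' [Pd' Hlt]]|Hno].
    + apply (IH d'); [exact Pd'|lia].
    + exists d. split; [exact Pd|]. intros d' Pd'. apply Z.nlt_ge. intros Hlt. eauto.
Qed.

Fixpoint pword {G : graph} {a b : gv G} (p : path a b) : list (ge G * bool) :=
  match p with
  | pnil _ => []
  | @pfwd _ e _ p' => (e, true) :: pword p'
  | @pbwd _ e _ p' => (e, false) :: pword p'
  end.

Lemma pword_pcat {G : graph} {a b c : gv G} (p : path a b) (q : path b c) :
  pword (pcat p q) = pword p ++ pword q.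
Proof. induction p; simpl; try rewrite IHp; reflexivity. Qed.

Lemma path_transport {G : graph} {a b a' b' : gv G} (p : path a b) :
  a = a' -> b = b' -> exists q : path a' b', pword q = pword p.
Proof. intros <- <-. exists p. reflexivity. Qed.

Definition bouquet (n : nat) : graph := @Graph unit (Fin.t n) (fun _ => tt) (fun _ => tt).

Fixpoint bouquet_path {n} (w : word n) : @path (bouquet n) tt tt :=
  match w with
  | [] => @pnil (bouquet n) tt
  | (x, true) :: w' => @pfwd (bouquet n) x tt (bouquet_path w')
  | (x, false) :: w' => @pbwd (bouquet n) x tt (bouquet_path w')
  end.

Lemma pword_bouquet_path {n} (w : word n) : pword (bouquet_path w) = w.
Proof. induction w as [|[x []] w IH]; simpl; try rewrite IH; reflexivity. Qed.

Lemma bouquet_path_app {n} (u v : word n) :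
  bouquet_path (u ++ v) = pcat (bouquet_path u) (bouquet_path v).
Proof. induction u as [|[x []] u IH]; simpl; try rewrite IH; reflexivity. Qed.

Lemma bouquet_path_pword {n} (a b : unit) (p : @path (bouquet n) a b) :
  match a, b return @path (bouquet n) a b -> Prop with
  | tt, tt => fun p => bouquet_path (pword p) = p
  end p.
Proof.
  induction p as [[]|e [] p IH|e [] p IH]; simpl in *; try rewrite IH; reflexivity.
Qed.

Definition presentation_computad {n} (R : list (word n)) : computad :=
  @Computad (bouquet n) (Fin.t (length R)) (fun _ => tt) (fun _ => tt)
    (fun k => bouquet_path (fnth R k)) (fun _ => @pnil (bouquet n) tt).

Section PresentationComputad.
Variables (n : nat) (R : list (word n)).
Local Notation PC := (presentation_computad R).

Lemma presentation_computad_gcong (a b : unit) (p q : @path (bouquet n) a b) :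
  @pcong PC a b p q -> gcong R (pword p) (pword q).
Proof.
  induction 1 as [| | |a b c d p q q' r _ IH|e b p|e b p|k].
  - apply gc_refl.
  - apply gc_sym; assumption.
  - eapply gc_trans; eassumption.
  - rewrite !pword_pcat. apply gcong_whisker, IH.
  - exact (gc_cancel R [] e true (pword p)).
  - exact (gc_cancel R [] e false (pword p)).
  - simpl. rewrite pword_bouquet_path.
    pose proof (gc_rel [] [] (fnth_In R k)) as H.
    rewrite app_nil_r in H. exact H.
Qed.

Lemma presentation_computad_pcong (u v : word n) :
  gcong R u v -> @pcong PC tt tt (bouquet_path u) (bouquet_path v).
Proof.
  induction 1 as [| | |u x b v|u r v Hr].
  - apply pc_refl.
  - apply pc_sym; assumption.
  - eapply pc_trans; eassumption.
  - rewrite !bouquet_path_app.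
    destruct b; simpl.
    + exact (pc_whisk (C := PC) (bouquet_path u) (bouquet_path v)
               (@pc_fb PC x tt (@pnil (bouquet n) tt))).
    + exact (pc_whisk (C := PC) (bouquet_path u) (bouquet_path v)
               (@pc_bf PC x tt (@pnil (bouquet n) tt))).
  - rewrite !bouquet_path_app. destruct (fnth_surj R r Hr) as [k <-].
    exact (pc_whisk (C := PC) (bouquet_path u) (bouquet_path v) (@pc_rel PC k)).
Qed.

Lemma presentation_computad_pcong_iff (a b : unit) (p q : @path (bouquet n) a b) :
  @pcong PC a b p q <-> gcong R (pword p) (pword q).
Proof.
  split; [apply presentation_computad_gcong|].
  intros H. apply presentation_computad_pcong in H.
  pose proof (bouquet_path_pword a b p) as Ep. pose proof (bouquet_path_pword a b q) as Eq.
  destruct a, b. rewrite <- Ep, <- Eq. exact H.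
Qed.

Lemma presentation_computad_presents (X : group) :
  is_presentation X R -> presents (presentation_computad R) (Sigma X).
Proof.
  intros [_ [F [Fnil [Fapp [Fsurj Fker]]]]].
  exists (fun _ => tt), (fun a b (p : @path (bouquet n) a b) => F (pword p)).
  split; [|split; [|split; [|split; [|split]]]].
  - intros []. exists tt. reflexivity.
  - intros [] [] _. reflexivity.
  - intros a. exact Fnil.
  - intros a b c p q. simpl. rewrite pword_pcat. apply Fapp.
  - intros [] [] x. destruct (Fsurj x) as [u Hu]. exists (bouquet_path u).
    simpl. rewrite pword_bouquet_path. exact Hu.
  - intros a b p q. rewrite Fker. symmetry. apply presentation_computad_pcong_iff.
Qed.

End PresentationComputad.

Lemma single_object_loops (G : graph) (a0 : gv G) :
  (forall v, v = a0) -> forall e : ge G, src e = tgt e.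
Proof. intros Ha e. rewrite (Ha (src e)), (Ha (tgt e)). reflexivity. Qed.

Section LoopGraphs.
Variables (G : graph).
Hypothesis loops : forall e : ge G, src e = tgt e.

Lemma boundary_of_loops (c : ge G -> R) (d : gv G -> R) : is_boundary c d -> forall v, d v = 0.
Proof.
  intros [_ Hc] v. destruct (Hc v) as [l [_ [_ ->]]].
  apply lsum_zero. intros e _. rewrite loops. ring.
Qed.

Lemma is_cycle_of_loops (c : ge G -> R) : fsupp c -> is_cycle c.
Proof.
  intros Hc. split; [exact Hc|]. intros v. exists []. split; [constructor|split; [|reflexivity]].
  intros e He. exfalso. apply He. rewrite loops. ring.
Qed.

Lemma dimH0_loops_pos (a0 : gv G) {k} : dimH0 G k -> (0 < k)%nat.
Proof.
  intros [w [Hw [_ [_ Hspan]]]]. destruct k as [|k]; [exfalso|lia].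
  assert (Hind : fsupp (fun v => Defs.ind (v = a0))).
  { exists [a0]. intros v Hv. left. unfold Defs.ind in Hv.
    destruct (excluded_middle_informative (v = a0)); [auto|lra]. }
  destruct (Hspan _ Hind) as [lam [c Hc]].
  pose proof (boundary_of_loops _ _ Hc a0) as H. unfold lincomb, Defs.ind in H. rewrite Hw in H.
  simpl in H. destruct (excluded_middle_informative (a0 = a0)); [lra|auto].
Qed.

(* Every arrow supports a 1-cycle, so the supports of a cycle basis cover all arrows. *)
Lemma dimH1_loops_arrows_listed {k} : dimH1 G k -> exists L : list (ge G), forall e, In e L.
Proof.
  intros [z [_ [Hcyc [_ Hspan]]]].
  assert (Hsupp : exists L, forall c, In c z -> forall e, c e <> 0 -> In e L).
  { clear Hspan. induction z as [|c z IH]; [exists []; intros c []|].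
    destruct (proj1 (Hcyc c (or_introl eq_refl))) as [l1 Hl1].
    destruct IH as [L HL]; [intros c' Hc'; apply Hcyc; right; exact Hc'|].
    exists (l1 ++ L). intros c' [<-|Hc'] e He; apply in_or_app; [left|right]; eauto. }
  destruct Hsupp as [L HL]. exists L. intros e.
  set (ie := fun e' => Defs.ind (e' = e)).
  assert (Hie : ie e = 1) by (unfold ie, Defs.ind; destruct excluded_middle_informative; tauto).
  destruct (Hspan ie) as [lam Hlam].
  { apply is_cycle_of_loops. exists [e]. intros x Hx. left. unfold ie, Defs.ind in Hx.
    destruct (excluded_middle_informative (x = e)); [auto|lra]. }
  destruct (lsum_nonzero (seq 0 (length z)) (fun i => lam i * nth i z (fun _ => 0) e))
    as [i [Hi Hne]].
  { unfold lincomb in Hlam. rewrite <- Hlam, Hie. lra. }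
  apply in_seq in Hi. apply (HL (nth i z (fun _ => 0))); [apply nth_In; lia|].
  intros Hz0. apply Hne. rewrite Hz0. ring.
Qed.

End LoopGraphs.

Lemma dimH1_le_length {G : graph} {L : list (ge G)} {k} :
  (forall e, In e L) -> dimH1 G k -> (k <= length L)%nat.
Proof.
  intros HL [z [Hz [_ [Hfree _]]]].
  apply (free_rows_le_cols k (length L) (fun i j => nth j (map (nth i z (fun _ => 0)) L) 0)).
  intros lam Hlam i Hi. apply (Hfree lam); [|exact Hi].
  intros e. destruct (In_nth L e e (HL e)) as [j [Hj Hje]].
  pose proof (Hlam j Hj) as E. change R0 with 0 in E. rewrite <- E.
  unfold lincomb. rewrite Hz. apply lsum_ext. intros i' _. f_equal.
  rewrite (nth_indep _ _ (nth i' z (fun _ => 0) e)) by (rewrite length_map; exact Hj).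
  rewrite map_nth, Hje. reflexivity.
Qed.

Lemma is_bdry_of_zero (G : graph) (g : gv G -> R) : (forall v, g v = 0) -> is_bdry g.
Proof.
  intros Hg. exists (fun _ => 0). split.
  - exists []. intros e He. exfalso. apply He. reflexivity.
  - intros v. exists []. split; [constructor|split].
    + intros e He. exfalso. apply He. ring.
    + rewrite Hg. reflexivity.
Qed.

Lemma dimH0_single_object (G : graph) (a0 : gv G) : (forall v, v = a0) -> dimH0 G 1.
Proof.
  intros Ha. pose proof (single_object_loops G a0 Ha) as loops.
  exists [fun _ => 1]. split; [reflexivity|split; [|split]].
  - intros d [<-|[]]. exists [a0]. intros v _. left. symmetry. apply Ha.
  - intros lam [c Hc] i Hi. pose proof (boundary_of_loops G loops _ _ Hc a0) as H.
    unfold lincomb in H. simpl in H. replace i with 0%nat by lia. lra.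
  - intros d _. exists (fun _ => d a0). apply is_bdry_of_zero. intros v.
    unfold lincomb. simpl. rewrite (Ha v). ring.
Qed.

Definition unit_vectors (n : nat) : list (Fin.t n -> R) :=
  map (fun i (x : Fin.t n) => delta (idx x) i) (seq 0 n).

Lemma unit_vectors_length n : length (unit_vectors n) = n.
Proof. unfold unit_vectors. rewrite length_map, length_seq. reflexivity. Qed.

Lemma lincomb_unit_vectors n lam (x : Fin.t n) : lincomb (unit_vectors n) lam x = lam (idx x).
Proof.
  unfold lincomb. rewrite unit_vectors_length.
  rewrite <- (lsum_delta lam (idx x) 0 n) by (pose proof (idx_lt x); lia).
  apply lsum_ext. intros i Hi. apply in_seq in Hi. f_equal.
  rewrite (nth_indep _ _ (fun x : Fin.t n => delta (idx x) 0))
    by (rewrite unit_vectors_length; lia).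
  unfold unit_vectors. rewrite (map_nth (fun i (x : Fin.t n) => delta (idx x) i)), seq_nth by lia.
  reflexivity.
Qed.

Lemma dimH1_bouquet n : dimH1 (bouquet n) n.
Proof.
  exists (unit_vectors n). split; [apply unit_vectors_length|split; [|split]].
  - intros c _. apply (is_cycle_of_loops (bouquet n)); [reflexivity|].
    exists (fin_enum n). intros x _. apply fin_enum_In.
  - intros lam H i Hi. pose proof (lincomb_unit_vectors n lam (Fin.of_nat_lt Hi)) as E.
    rewrite idx_of_nat in E. rewrite <- E. apply H.
  - intros c _.
    exists (fun i => match lt_dec i n with left h => c (Fin.of_nat_lt h) | right _ => 0 end).
    intros x. rewrite (lincomb_unit_vectors n). destruct (lt_dec (idx x) n) as [h|h].
    + rewrite of_nat_idx. reflexivity.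
    + pose proof (idx_lt x). lia.
Qed.

Lemma euler_char_bouquet n : euler_char (bouquet n) (1 - Z.of_nat n).
Proof.
  exists 1%nat, n. split; [|split; [apply dimH1_bouquet|lia]].
  apply (dimH0_single_object (bouquet n) tt). intros []. reflexivity.
Qed.

Lemma groupoid_deficiency_of_presentation {X : group} {n} {R : list (word n)} :
  is_presentation X R -> groupoid_deficiencies (Sigma X) (Z.of_nat n - Z.of_nat (length R)).
Proof.
  intros HP. exists (presentation_computad R). split; [|split].
  - split; [constructor; exact tt|]. intros [] []. constructor. exact (@pnil (bouquet n) tt).
  - apply presentation_computad_presents, HP.
  - exists (1 - Z.of_nat n)%Z, (fin_enum (length R)).
    split; [apply euler_char_bouquet|split; [apply fin_enum_NoDup|split; [apply fin_enum_In|]]].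
    rewrite (fin_enum_length _ : length (A := cells (presentation_computad R)) _ = _). lia.
Qed.

Lemma presents_Sigma_single_object {X : group} {C : computad} :
  presents C (Sigma X) -> exists a0 : gv C, forall v, v = a0.
Proof.
  intros [fo [_ [Hsurj [Hinj _]]]]. destruct (Hsurj tt) as [a0 _].
  exists a0. intros v. apply Hinj. destruct (fo v), (fo a0). reflexivity.
Qed.

Section ComputadPresentation.
Variables (X : group) (C : computad) (a0 : gv C).
Hypothesis single_object : forall v : gv C, v = a0.
Variable FC : forall a b : gv C, path a b -> X.
Arguments FC {a b}.
Hypothesis FC_nil : forall a, FC (pnil a) = gone X.
Hypothesis FC_cat : forall a b c (p : path a b) (q : path b c), FC (pcat p q) = gmul (FC p) (FC q).
Hypothesis FC_ker : forall a b (p q : path a b), FC p = FC q <-> pcong p q.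
Hypothesis FC_surj : forall x : X, exists p : path a0 a0, FC p = x.

Definition arrow_val (e : ge C) : X := FC (pfwd e (pnil (tgt e))).

Lemma FC_pword a b (p : path a b) : FC p = weval arrow_val (pword p).
Proof.
  induction p as [a|e b p IH|e b p IH].
  - apply FC_nil.
  - change (pfwd e p) with (pcat (pfwd e (pnil (tgt e))) p). rewrite FC_cat, IH. reflexivity.
  - change (pbwd e p) with (pcat (pbwd e (pnil (src e))) p). rewrite FC_cat, IH. simpl.
    f_equal. apply ginv_unique. unfold arrow_val. simpl.
    rewrite <- FC_cat, <- (FC_nil (tgt e)). apply FC_ker, pc_bf.
Qed.

Lemma loop_path_exists (w : list (ge C * bool)) : exists p : path a0 a0, pword p = w.
Proof.
  induction w as [|[e b] w [p Hp]]; [exists (pnil a0); reflexivity|].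
  destruct b.
  - destruct (path_transport p (eq_sym (single_object (tgt e))) eq_refl) as [q Hq].
    destruct (path_transport (pfwd e q) (single_object (src e)) eq_refl) as [r Hr].
    exists r. rewrite Hr. simpl. rewrite Hq, Hp. reflexivity.
  - destruct (path_transport p (eq_sym (single_object (src e))) eq_refl) as [q Hq].
    destruct (path_transport (pbwd e q) (single_object (tgt e)) eq_refl) as [r Hr].
    exists r. rewrite Hr. simpl. rewrite Hq, Hp. reflexivity.
Qed.

Variables (m : nat) (enc : ge C -> Fin.t m) (dec : Fin.t m -> ge C).
Hypothesis decK : forall e, dec (enc e) = e.
Hypothesis encK : forall k, enc (dec k) = k.
Variable cell_list : list (cells C).
Hypothesis cell_list_all : forall al, In al cell_list.

Definition cell_relator (al : cells C) : word m :=
  wmap enc (pword (csrc al) ++ winv (pword (ctgt al))).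

Definition computad_relators : list (word m) :=
  nodup (fun u v => excluded_middle_informative (u = v)) (map cell_relator cell_list).

Definition word_val (u : word m) : X := weval arrow_val (wmap dec u).

Lemma pcong_gcong a b (p q : path a b) :
  pcong p q -> gcong computad_relators (wmap enc (pword p)) (wmap enc (pword q)).
Proof.
  induction 1 as [| | |a b c d p q q' r _ IH|e b p|e b p|al].
  - apply gc_refl.
  - apply gc_sym; assumption.
  - eapply gc_trans; eassumption.
  - rewrite !pword_pcat, !wmap_app. apply gcong_whisker, IH.
  - exact (gc_cancel _ [] (enc e) true (wmap enc (pword p))).
  - exact (gc_cancel _ [] (enc e) false (wmap enc (pword p))).
  - set (s := wmap enc (pword (csrc al))). set (t := wmap enc (pword (ctgt al))).
    assert (Hrel : In (s ++ winv t) computad_relators).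
    { apply nodup_In. unfold s, t. rewrite <- wmap_winv, <- wmap_app.
      apply (in_map cell_relator), cell_list_all. }
    eapply gc_trans.
    + pose proof (gcong_app (gc_refl _ s) (gc_sym (gcong_winv_l computad_relators t))) as H.
      rewrite app_nil_r in H. exact H.
    + rewrite app_assoc. exact (gc_rel [] t Hrel).
Qed.

Lemma word_val_gcong u v : gcong computad_relators u v -> word_val u = word_val v.
Proof.
  unfold word_val. induction 1 as [| | |u x b v|u r v Hr]; try congruence.
  - rewrite !wmap_app. apply weval_cancel.
  - rewrite !wmap_app, !weval_app.
    apply nodup_In, in_map_iff in Hr. destruct Hr as [al [<- _]].
    unfold cell_relator. rewrite wmap_cancel, weval_app, weval_winv by exact decK.
    rewrite <- !FC_pword. rewrite (proj2 (FC_ker _ _ (csrc al) (ctgt al)) (pc_rel al)).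
    rewrite gmulVr, gmul1l. reflexivity.
Qed.

Lemma computad_relators_present : is_presentation X computad_relators.
Proof.
  split; [apply NoDup_nodup|]. exists word_val. split; [reflexivity|split; [|split]].
  - intros u v. unfold word_val. rewrite wmap_app. apply weval_app.
  - intros x. destruct (FC_surj x) as [p <-]. exists (wmap enc (pword p)).
    unfold word_val. rewrite wmap_cancel by exact decK. symmetry. apply FC_pword.
  - intros u v. split; [|apply word_val_gcong].
    intros Huv. destruct (loop_path_exists (wmap dec u)) as [p Hp].
    destruct (loop_path_exists (wmap dec v)) as [q Hq].
    assert (Hpq : pcong p q) by (apply FC_ker; rewrite !FC_pword, Hp, Hq; exact Huv).
    apply pcong_gcong in Hpq. rewrite Hp, Hq, !wmap_cancel in Hpq by exact encK. exact Hpq.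
Qed.

Lemma computad_relators_length : (length computad_relators <= length cell_list)%nat.
Proof.
  rewrite <- (length_map cell_relator cell_list). apply NoDup_incl_length; [apply NoDup_nodup|].
  intros r Hr. apply nodup_In in Hr. exact Hr.
Qed.

End ComputadPresentation.

Lemma presentation_of_computad {X : group} {C : computad} {cl : list (cells C)} {L : list (ge C)} :
  presents C (Sigma X) -> (forall al, In al cl) -> NoDup L -> (forall e, In e L) ->
  exists R : list (word (length L)), is_presentation X R /\ (length R <= length cl)%nat.
Proof.
  intros HC Hcl HL HLall.
  destruct (presents_Sigma_single_object HC) as [a0 Ha0].
  destruct (listing_bijection L HL HLall) as [enc [decK encK]].
  destruct HC as [fo [FC [_ [_ [FC_nil [FC_cat [FC_surj FC_ker]]]]]]].
  exists (computad_relators C (length L) enc cl). split; [|apply computad_relators_length].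
  exact (computad_relators_present X C a0 Ha0 FC FC_nil FC_cat FC_ker (FC_surj a0 a0)
           _ enc (fnth L) decK encK cl Hcl).
Qed.

Lemma presentation_of_groupoid_deficiency {X : group} {d} :
  groupoid_deficiencies (Sigma X) d ->
  exists n (R : list (word n)), is_presentation X R /\ (d <= Z.of_nat n - Z.of_nat (length R))%Z.
Proof.
  intros [C [_ [HC [chi [cl [[k0 [k1 [H0 [H1 ->]]]] [_ [Hcl ->]]]]]]]].
  destruct (presents_Sigma_single_object HC) as [a0 Ha0].
  pose proof (single_object_loops C a0 Ha0) as loops.
  pose proof (dimH0_loops_pos C loops a0 H0) as Hk0.
  destruct (dimH1_loops_arrows_listed C loops H1) as [L0 HL0].
  set (L := nodup (fun x y => excluded_middle_informative (x = y)) L0).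
  assert (HL : forall e, In e L) by (intros e; apply nodup_In, HL0).
  assert (HLnd : NoDup L) by apply NoDup_nodup.
  clearbody L. pose proof (dimH1_le_length HL H1) as Hk1.
  destruct (presentation_of_computad HC Hcl HLnd HL) as [R [HR HRl]].
  exists (length L), R. split; [exact HR|lia].
Qed.

Theorem mainTheorem13 (X : group) :
  finitely_presented X ->
  exists d : Z,
    IsGreatest (classical_deficiencies X) d /\
    IsGreatest (groupoid_deficiencies (Sigma X)) d.
Proof.
  intros [n0 [R0 HP0]].
  destruct (Z_bounded_has_greatest (classical_deficiencies X) (Z.of_nat n0)
              (Z.of_nat n0 - Z.of_nat (length R0))) as [D [HD HDmax]].
  - exists n0, R0. split; [exact HP0|reflexivity].
  - intros d [n [R [HP ->]]]. pose proof (deficiency_bound HP0 HP). lia.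
  - exists D. split; [split; assumption|split].
    + destruct HD as [n [R [HP ->]]]. exact (groupoid_deficiency_of_presentation HP).
    + intros d Hd. destruct (presentation_of_groupoid_deficiency Hd) as [n [R [HP Hle]]].
      specialize (HDmax _ (ex_intro _ n (ex_intro _ R (conj HP eq_refl)))). lia.
Qed.
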